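(* There exists a unique bilinear pairing $\langle-,-\rangle:\mathcal{H}\times\mathcal{H}\to K$ such that: (1) $\langle 1,x\rangle=\varepsilon(x)$ for all $x\in\mathcal{H}$; (2) $\langle xy,z\rangle=\langle y\otimes x,\Delta(z)\rangle$ for all $x,y,z\in\mathcal{H}$, where $\langle a\otimes b,c\otimes d\rangle=\langle a,c\rangle\langle b,d\rangle$; (3) $\langle B^+(x),y\rangle=\langle x,\gamma(y)\rangle$ for all $x,y\in\mathcal{H}$. Moreover: (4) $\langle-,-\rangle$ is symmetric and non-degenerate; (5) if $x,y$ are homogeneous of different weights then $\langle x,y\rangle=0$; (6) $\langle S(x),y\rangle=\langle x,S(y)\rangle$ for all $x,y\in\mathcal{H}$, where $S$ is the antipode of $\mathcal{H}$.
   Context: Let $K$ be a field. Planar rooted trees have their children linearly ordered left to right; a planar forest is a finite, possibly empty, sequence $t_1\cdots t_n$ of planar rooted trees ($1$ = empty forest); the weight of a forest is its number of vertices. $\mathcal{H}$ is the free associative unital $K$-algebra on planar rooted trees, with basis the planar forests and product concatenation, graded by weight. $B^+(F)$ is the tree obtained by grafting the trees of $F$ (in order) on a new common root. $\varepsilon(F)=\delta_{F,1}$. $\Delta$ is the unique linear map with $\Delta(1)=1\otimes1$, $\Delta(xy)=(x\otimes1)\Delta(y)+\Delta(x)(1\otimes y)-x\otimes y$, $\Delta(B^+(x))=B^+(x)\otimes 1+(\mathrm{Id}\otimes B^+)\Delta(x)$; with it $\mathcal{H}$ is an infinitesimal Hopf algebra, whose antipode $S$ is the inverse of $\mathrm{Id}$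 for the convolution $f\star g=m\circ(f\otimes g)\circ\Delta$. The linear map $\gamma:\mathcal{H}\to\mathcal{H}$ is defined on forests by $\gamma(t_1\cdots t_n)=\delta_{t_1,\bullet}\,t_2\cdots t_n$ (where $\bullet$ is the one-vertex tree) and $\gamma(1)=0$. *)

From HB Require Import structures.
From mathcomp Require Import all_boot all_order all_algebra.
From mathcomp Require Import finmap.
From mathcomp.multinomials Require Import monalg.
Set Implicit Arguments. Unset Strict Implicit. Unset Printing Implicit Defensive.
Import GRing.Theory.
Local Open Scope ring_scope.

(* A planar rooted tree is a root together with the (ordered) list of
   the subtrees grafted on it: [Node F] is B^+(F). *)
Inductive ptree : Type := Node of seq ptree.

Fixpoint ptree_enc (t : ptree) : GenTree.tree unit :=
  let: Node ts := t in GenTree.Node 0 (map ptree_enc ts).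
Fixpoint ptree_dec (g : GenTree.tree unit) : ptree :=
  match g with
  | GenTree.Leaf _ => Node [::]
  | GenTree.Node _ gs => Node (map ptree_dec gs)
  end.
Fixpoint ptree_encK (t : ptree) : ptree_dec (ptree_enc t) = t :=
  match t return ptree_dec (ptree_enc t) = t with
  | Node ts => f_equal Node
      ((fix aux (ts : seq ptree) : map ptree_dec (map ptree_enc ts) = ts :=
          match ts with
          | [::] => erefl
          | t :: ts' => f_equal2 cons (ptree_encK t) (aux ts')
          end) ts)
  end.
HB.instance Definition _ := Countable.copy ptree (can_type ptree_encK).

Definition forest := seq ptree.
HB.instance Definition _ := Countable.on forest.
Lemma forest_unitm (x y : forest) : x ++ y = [::] -> x = [::] /\ y = [::].
Proof. by case: x. Qed.
HB.instance Definition _ := Choice_isMonomialDef.Build forest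
  (@catA ptree) (@cat0s ptree) (@cats0 ptree) forest_unitm.

Fixpoint tweight (t : ptree) : nat :=
  let: Node ts := t in (sumn (map tweight ts)).+1.
Definition fweight (F : forest) : nat := sumn (map tweight F).

Definition dot : ptree := Node [::].

(* H = free associative unital K-algebra on planar trees: basis the planar
   forests, product = concatenation (monoid algebra of the forest monoid). *)
Definition H (K : fieldType) := {malg K[forest]}.
(* H (x) H, with basis the pairs of forests, F (x) G  <->  (F, G) *)
Definition H2 (K : fieldType) := {malg K[(forest * forest)%type]}.

Section Ops.
Variable K : fieldType.

Definition linext (V : lmodType K) (f : forest -> V) (h : H K) : V :=
  \sum_(F <- msupp h) h@_F *: f F.

Definition eps (h : H K) : K := h@_[::].

Definition Bp (h : H K) : H K := linext (fun F => << [:: Node F] >> : H K) h.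

Definition gamma_basis (F : forest) : H K :=
  match F with
  | [::] => 0
  | t :: F' => if t == dot then << F' >> else 0
  end.
Definition gam (h : H K) : H K := linext gamma_basis h.

Definition mapk (f : forest * forest -> forest * forest) (u : H2 K) : H2 K :=
  \sum_(k <- msupp u) << u@_k *g f k >>.

(* the coproduct on basis elements, by the defining recursion:
   Delta(1) = 1(x)1,
   Delta(t F) = (t(x)1) Delta(F) + Delta(t) (1(x)F) - t (x) F,
   Delta(B^+(G)) = B^+(G)(x)1 + (Id (x) B^+) Delta(G). *)
Fixpoint delta_tree (t : ptree) : H2 K :=
  let: Node G := t in
  let fix delta_for (G : seq ptree) : H2 K :=
    match G with
    | [::] => << ([::], [::]) >>
    | s :: G' =>
        mapk (fun k => (s :: k.1, k.2)) (delta_for G')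
      + mapk (fun k => (k.1, k.2 ++ G')) (delta_tree s)
      - << ([:: s], G') >>
    end in
  << ([:: Node G], [::]) >> + mapk (fun k => (k.1, [:: Node k.2])) (delta_for G).

Fixpoint delta_forest (G : forest) : H2 K :=
  match G with
  | [::] => << ([::], [::]) >>
  | s :: G' =>
      mapk (fun k => (s :: k.1, k.2)) (delta_forest G')
    + mapk (fun k => (k.1, k.2 ++ G')) (delta_tree s)
    - << ([:: s], G') >>
  end.

Definition Delta (h : H K) : H2 K := linext delta_forest h.

Definition tens (a b : H K) : H2 K :=
  \sum_(F <- msupp a) \sum_(G <- msupp b) << a@_F * b@_G *g (F, G) >>.

Definition conv (f g : H K -> H K) (h : H K) : H K :=
  \sum_(k <- msupp (Delta h))
     (Delta h)@_k *: (f << k.1 >> * g << k.2 >>).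

Definition is_antipode (S : H K -> H K) : Prop :=
  (forall h, conv S id h = eps h *: 1) /\ (forall h, conv id S h = eps h *: 1).

(* a bilinear pairing H x H -> K is determined by its values p F G on
   pairs of basis forests; pairH p is its bilinear extension *)
Definition pairH (p : forest -> forest -> K) (x y : H K) : K :=
  \sum_(F <- msupp x) \sum_(G <- msupp y) x@_F * y@_G * p F G.

Definition pairH2 (p : forest -> forest -> K) (u v : H2 K) : K :=
  \sum_(k <- msupp u) \sum_(l <- msupp v)
     u@_k * v@_l * (p k.1 l.1 * p k.2 l.2).

Definition pairing_axioms (p : forest -> forest -> K) : Prop :=
  [/\ (forall x : H K, pairH p 1 x = eps x),
      (forall x y z : H K, pairH p (x * y) z = pairH2 p (tens y x) (Delta z))
    & (forall x y : H K, pairH p (Bp x) y = pairH p x (gam y))].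

Definition homogeneous (n : nat) (x : H K) : Prop :=
  forall F, F \in msupp x -> fweight F = n.

End Ops.

(* On basis forests, axiom (2) for a tree x = t = B^+(T) followed by axiom (3) forces
     <t F, G> = sum over Delta G of <F, G'> <T, gamma G''>,
   which defines the pairing by recursion on the left argument, and shows it is unique.
   The same recursion proves the dual identity <Z, X Y> = sum over Delta Z of <Z', Y> <Z'', X>,
   from which symmetry follows; Delta and gamma preserve weights, hence orthogonality of
   different weights.
   For non-degeneracy the pairing is extended to the tensor algebra of H, and a null
   combination of tensors of forests is shown to vanish by induction on their weights:
   pairing with a tensor whose first factor is t G, t a tree, cuts the root of the first tree
   of the first factor (turning (B^+(T) F') (x) L into F' (x) T (x) L), while pairing with
   a tensor whose first factor is 1 removes empty first factors.
   Finally <S F, G> = <S G, F> by induction on the total weight: pairing the identities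
   S * Id = Id * S = 1 eps with forests shows that the antisymmetric part of <S -, -> is
   annihilated by Delta. *)

From HB Require Import structures.
From mathcomp Require Import all_boot all_order all_algebra.
From mathcomp Require Import finmap.
From mathcomp.multinomials Require Import monalg.
From mathcomp Require Import ring zify.
Set Implicit Arguments. Unset Strict Implicit. Unset Printing Implicit Defensive.
Import GRing.Theory.
Local Open Scope ring_scope.

Section LinearForms.
Variables (R : comNzRingType) (T : choiceType).
Implicit Types (h : T -> R) (u v : {malg R[T]}).

Definition mdot h u : R := \sum_(k <- msupp u) u@_k * h k.

Lemma mdotEw h u (d : {fset T}) :
  (msupp u `<=` d)%fset -> mdot h u = \sum_(k <- d) u@_k * h k.
Proof.
move=> le; rewrite /mdot [LHS](big_fset_incl _ le) => //= k _ /mcoeff_outdom ->.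
by rewrite mul0r.
Qed.

Lemma mdotD h u v : mdot h (u + v) = mdot h u + mdot h v.
Proof.
rewrite (mdotEw _ (msuppD_le u v)) (mdotEw _ (fsubsetUl _ (msupp v))).
rewrite (mdotEw _ (fsubsetUr (msupp u) _)) -big_split /=.
by apply: eq_bigr => k _; rewrite mcoeffD mulrDl.
Qed.

Lemma mdotZ h c u : mdot h (c *: u) = c * mdot h u.
Proof.
rewrite (mdotEw _ (msuppZ_le c u)) /mdot big_distrr /=.
by apply: eq_bigr => k _; rewrite mcoeffZ mulrA.
Qed.

Lemma mdot0 h : mdot h 0 = 0.
Proof. by rewrite /mdot msupp0 big_seq_fset0. Qed.

Lemma mdotB h u v : mdot h (u - v) = mdot h u - mdot h v.
Proof. by rewrite mdotD -scaleN1r mdotZ mulN1r. Qed.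

Lemma mdot_sum h (I : Type) (r : seq I) (P : pred I) (F : I -> {malg R[T]}) :
  mdot h (\sum_(i <- r | P i) F i) = \sum_(i <- r | P i) mdot h (F i).
Proof. exact: (big_morph (mdot h) (mdotD h) (mdot0 h)). Qed.

Lemma mdotU h c k : mdot h << c *g k >> = c * h k.
Proof. by rewrite (mdotEw _ msuppU_le) big_seq_fset1 mcoeffUU. Qed.

Lemma mdotU1 h k : mdot h << k >> = h k.
Proof. by rewrite mdotU mul1r. Qed.

Lemma eq_mdot h h' u : h =1 h' -> mdot h u = mdot h' u.
Proof. by move=> e; apply: eq_bigr => k _; rewrite e. Qed.

Lemma mdot_coef u k0 : mdot (fun k => (k == k0)%:R) u = u@_k0.
Proof.
rewrite (mdotEw _ (fsubsetUl _ [fset k0]%fset)) (big_fsetD1 k0) /=; last first.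
  by rewrite in_fsetU in_fset1 eqxx orbT.
rewrite eqxx mulr1 big1_fset ?addr0 // => k.
by rewrite in_fsetD1 => /andP [/negbTE -> _] _; rewrite mulr0.
Qed.

Lemma mdot_fD h1 h2 u :
  mdot (fun k => h1 k + h2 k) u = mdot h1 u + mdot h2 u.
Proof. by rewrite /mdot -big_split; apply: eq_bigr => k _; rewrite mulrDr. Qed.

Lemma mdot_fZ c h u : mdot (fun k => c * h k) u = c * mdot h u.
Proof. by rewrite /mdot big_distrr; apply: eq_bigr => k _; rewrite mulrCA. Qed.

Lemma mdot_fB h1 h2 u :
  mdot (fun k => h1 k - h2 k) u = mdot h1 u - mdot h2 u.
Proof. by rewrite /mdot -sumrB; apply: eq_bigr => k _; rewrite mulrBr. Qed.

Lemma mdot_f0 u : mdot (fun _ => 0) u = 0.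
Proof. by rewrite /mdot big1 // => k _; rewrite mulr0. Qed.

End LinearForms.

Lemma exchange_mdot (R : comNzRingType) (T U : choiceType) (f : T -> U -> R)
    (u : {malg R[T]}) (w : {malg R[U]}) :
  mdot (fun k => mdot (f k) w) u = mdot (fun l => mdot (f^~ l) u) w.
Proof.
rewrite /mdot; under eq_bigr do rewrite big_distrr.
rewrite exchange_big /=; apply: eq_bigr => l _; rewrite big_distrr /=.
by apply: eq_bigr => k _; rewrite mulrCA.
Qed.

Lemma forest_ind (P : forest -> Prop) :
  P [::] -> (forall S G, P S -> P G -> P (Node S :: G)) -> forall G, P G.
Proof.
move=> P0 PS.
pose IHt := fix IHt (t : ptree) : forall G, P G -> P (t :: G) :=
  match t with
  | Node S0 => fun G PG => PS S0 G ((fix IHl (l : seq ptree) : P l :=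
       match l with [::] => P0 | u :: l' => IHt u l' (IHl l') end) S0) PG
  end.
exact (fix IHl (l : seq ptree) : P l :=
       match l with [::] => P0 | u :: l' => IHt u l' (IHl l') end).
Qed.

Section BasisExpansions.
Variable K : fieldType.
Implicit Types (F G : forest) (x y : H K).

Lemma mdot_linext (T : choiceType) (f : forest -> {malg K[T]}) (h : T -> K) x :
  mdot h (linext f x) = mdot (fun F => mdot h (f F)) x.
Proof. by rewrite /linext mdot_sum; apply: eq_bigr => F _; rewrite mdotZ. Qed.

Lemma linextU (V : lmodType K) (f : forest -> V) F : linext f (<< F >> : H K) = f F.
Proof. by rewrite /linext msuppU1 big_seq_fset1 mcoeffUU scale1r. Qed.

Lemma mdotM (h : forest -> K) x y :
  mdot h (x * y) = mdot (fun X => mdot (fun Y => h (X ++ Y)) y) x.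
Proof.
rewrite malgME mdot_sum; apply: eq_bigr => X _.
rewrite mdot_sum [RHS]big_distrr; apply: eq_bigr => Y _.
by rewrite mdotU -mulrA.
Qed.

Lemma mdot1 (h : forest -> K) : mdot h (1 : H K) = h [::].
Proof. by rewrite -mpolyC1E mdotU1. Qed.

Lemma pairHE (p : forest -> forest -> K) x y :
  pairH p x y = mdot (fun F => mdot (p F) y) x.
Proof.
rewrite /pairH /mdot; apply: eq_bigr => F _; rewrite big_distrr /=.
by apply: eq_bigr => G _; rewrite mulrA.
Qed.

Lemma pairH2E (p : forest -> forest -> K) (u v : H2 K) :
  pairH2 p u v = mdot (fun k => mdot (fun l => p k.1 l.1 * p k.2 l.2) v) u.
Proof.
rewrite /pairH2 /mdot; apply eq_bigr => k _; rewrite big_distrr /=.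
by apply eq_bigr => l _; rewrite [RHS]mulrA.
Qed.

Lemma mdot_tens (h : forest * forest -> K) x y :
  mdot h (tens x y) = mdot (fun F => mdot (fun G => h (F, G)) y) x.
Proof.
rewrite mdot_sum; apply: eq_bigr => F _.
rewrite mdot_sum [RHS]big_distrr; apply: eq_bigr => G _.
by rewrite mdotU -mulrA.
Qed.

Lemma mdot_mapk (h : forest * forest -> K) f (u : H2 K) :
  mdot h (mapk f u) = mdot (h \o f) u.
Proof. by rewrite mdot_sum; apply: eq_bigr => k _; rewrite mdotU. Qed.

Lemma epsU F : eps (<< F >> : H K) = (F == [::])%:R.
Proof. by rewrite /eps mcoeffU. Qed.

Lemma DeltaU F : Delta (<< F >> : H K) = delta_forest K F.
Proof. exact: linextU. Qed.

Lemma mdot_linear (S : {linear H K -> H K}) (h : forest -> K) x :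
  mdot h (S x) = mdot (fun F => mdot h (S << F >>)) x.
Proof.
rewrite {1}(monalgE x) linear_sum mdot_sum; apply: eq_bigr => F _.
have -> : << x@_F *g F >> = x@_F *: (<< F >> : H K).
  by apply/malgP => k; rewrite mcoeffZ !mcoeffU mulr_natr.
by rewrite linearZ mdotZ.
Qed.

End BasisExpansions.

Lemma fweight_cons t F : (fweight (t :: F) = tweight t + fweight F)%N.
Proof. by []. Qed.

Lemma fweight_cat F G : (fweight (F ++ G) = fweight F + fweight G)%N.
Proof. by rewrite /fweight map_cat sumn_cat. Qed.

Lemma tweight_node F : tweight (Node F) = (fweight F).+1.
Proof. by []. Qed.

Section Sweedler.
Variable K : fieldType.
Implicit Types (F G : forest) (h : forest -> forest -> K).

Definition sweedler G h : K := mdot (fun k => h k.1 k.2) (delta_forest K G).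
Definition sweedler_tree (t : ptree) h : K := mdot (fun k => h k.1 k.2) (delta_tree K t).

Lemma delta_tree_node G : delta_tree K (Node G) =
  << ([:: Node G], [::]) >> + mapk (fun k => (k.1, [:: Node k.2])) (delta_forest K G).
Proof. by congr (_ + mapk _ _); elim: G => //= s G ->. Qed.

Lemma sweedler_nil h : sweedler [::] h = h [::] [::].
Proof. exact: mdotU1. Qed.

Lemma sweedler_cons s G h : sweedler (s :: G) h =
  sweedler G (fun a b => h (s :: a) b) + sweedler_tree s (fun a b => h a (b ++ G))
  - h [:: s] G.
Proof. by rewrite /sweedler /= mdotB mdotD !mdot_mapk mdotU1. Qed.

Lemma sweedler_tree_node G h :
  sweedler_tree (Node G) h = h [:: Node G] [::] + sweedler G (fun a b => h a [:: Node b]).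
Proof. by rewrite /sweedler_tree delta_tree_node mdotD mdotU1 mdot_mapk. Qed.

Lemma sweedler_tree1 t h : sweedler_tree t h = sweedler [:: t] h.
Proof.
rewrite sweedler_cons sweedler_nil addrAC subrr add0r.
by apply: eq_mdot => k; rewrite cats0.
Qed.

Lemma eq_sweedler G h h' : (forall a b, h a b = h' a b) -> sweedler G h = sweedler G h'.
Proof. by move=> e; apply: eq_mdot => k; rewrite /= e. Qed.

Lemma sweedler_fD G h1 h2 :
  sweedler G (fun a b => h1 a b + h2 a b) = sweedler G h1 + sweedler G h2.
Proof. exact: mdot_fD. Qed.

Lemma sweedler_fB G h1 h2 :
  sweedler G (fun a b => h1 a b - h2 a b) = sweedler G h1 - sweedler G h2.
Proof. exact: mdot_fB. Qed.

Lemma sweedler_fZ G c h : sweedler G (fun a b => c * h a b) = c * sweedler G h.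
Proof. exact: mdot_fZ. Qed.

Lemma sweedler_fZr G c h : sweedler G (fun a b => h a b * c) = sweedler G h * c.
Proof. by rewrite mulrC -sweedler_fZ; apply: eq_sweedler => a b; rewrite mulrC. Qed.

Lemma sweedler_f0 G : sweedler G (fun _ _ => 0) = 0.
Proof. exact: mdot_f0. Qed.

Lemma exchange_sweedler G1 G2 (f : forest -> forest -> forest -> forest -> K) :
  sweedler G1 (fun a b => sweedler G2 (f a b)) =
  sweedler G2 (fun c d => sweedler G1 (fun a b => f a b c d)).
Proof. exact: (exchange_mdot (fun k l => f k.1 k.2 l.1 l.2)). Qed.

Lemma sweedler_counitr G (f : forest -> K) :
  sweedler G (fun a b => (b == [::])%:R * f a) = f G.
Proof.
elim: G f => [|[S] G IH] f; first by rewrite sweedler_nil mul1r.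
rewrite sweedler_cons (IH (fun a => f (Node S :: a))) sweedler_tree_node /=.
rewrite (@eq_sweedler _ _ (fun a b => 0 * f a)); last by move=> a b; rewrite mul0r.
by rewrite sweedler_fZ mul0r addr0 addrK.
Qed.

Lemma sweedler_counitl G (f : forest -> K) :
  sweedler G (fun a b => (a == [::])%:R * f b) = f G.
Proof.
elim/forest_ind: G f => [|S G IHS _] f; first by rewrite sweedler_nil mul1r.
rewrite sweedler_cons (@eq_sweedler _ _ (fun a b => 0 * f b)); last first.
  by move=> a b; rewrite mul0r.
rewrite sweedler_fZ mul0r add0r sweedler_tree_node /= mul0r add0r subr0.
exact: (IHS (fun b => f (Node b :: G))).
Qed.

Lemma sweedler_cat X Y h : sweedler (X ++ Y) h =
  sweedler Y (fun a b => h (X ++ a) b) + sweedler X (fun a b => h a (b ++ Y)) - h X Y.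
Proof.
elim: X h => [|s X IH] h /=; first by rewrite sweedler_nil addrK.
rewrite sweedler_cons IH sweedler_cons.
have -> : sweedler_tree s (fun a b => h a (b ++ X ++ Y)) =
          sweedler_tree s (fun a b => h a ((b ++ X) ++ Y)).
  by apply: eq_mdot => k; rewrite /= catA.
ring.
Qed.

Lemma eq_sweedler_weight G h h' :
  (forall a b, (fweight a + fweight b)%N = fweight G -> h a b = h' a b) ->
  sweedler G h = sweedler G h'.
Proof.
elim/forest_ind: G h h' => [|S G IHS IHG] h h' e; first by rewrite !sweedler_nil e.
rewrite !sweedler_cons !sweedler_tree_node /=.
rewrite (IHG _ (fun a b => h' (Node S :: a) b)); last first.
  by move=> a b eab; apply: e; rewrite !fweight_cons; lia.
rewrite (IHS _ (fun a b => h' a (Node b :: G))); last first.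
  by move=> a b eab; apply: e; rewrite !fweight_cons !tweight_node; lia.
by rewrite !e // -fweight_cat.
Qed.

End Sweedler.

Section Pairing.
Variable K : fieldType.
Implicit Types (F G X Y Z : forest).

Definition gamma_dual (f : forest -> K) (b : forest) : K :=
  if b is Node [::] :: b' then f b' else 0.

(* [pairing_cons t <F,->] is <t F, ->, computed by the formula of axioms (2) and (3). *)
Fixpoint pairing_cons (t : ptree) : (forest -> K) -> forest -> K :=
  match t with
  | Node T => fun pF G => sweedler G (fun a b => pF a * gamma_dual
      ((fix pairing F : forest -> K :=
          if F is u :: F' then pairing_cons u (pairing F') else fun G => (G == [::])%:R) T) b)
  end.

Definition pairing : forest -> forest -> K :=
  fix pairing F : forest -> K :=
    if F is u :: F' then pairing_cons u (pairing F') else fun G => (G == [::])%:R.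

Lemma pairing_nil G : pairing [::] G = (G == [::])%:R.
Proof. by []. Qed.

Lemma pairing_node_cons T F G :
  pairing (Node T :: F) G = sweedler G (fun a b => pairing F a * gamma_dual (pairing T) b).
Proof. by []. Qed.

Lemma gamma_dual_nil (f : forest -> K) : gamma_dual f [::] = 0.
Proof. by []. Qed.

Lemma eq_gamma_dual (f g : forest -> K) : f =1 g -> gamma_dual f =1 gamma_dual g.
Proof. by move=> e [|[[|? ?]] ?] //=. Qed.

Lemma pairing_tree1 T G : pairing [:: Node T] G = gamma_dual (pairing T) G.
Proof. exact: (sweedler_counitl G (gamma_dual (pairing T))). Qed.

Lemma pairing_cons_tree t F G :
  pairing (t :: F) G = sweedler G (fun a b => pairing F a * pairing [:: t] b).
Proof. by case: t => T; apply: eq_sweedler => a b; rewrite pairing_tree1. Qed.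

Lemma pairing_nilr F : pairing F [::] = (F == [::])%:R.
Proof.
by case: F => [|[T] F] //; rewrite pairing_node_cons sweedler_nil gamma_dual_nil mulr0.
Qed.

Lemma pairing_tree1r Y X : pairing Y [:: Node X] = gamma_dual (pairing^~ X) Y.
Proof.
case: Y => [|[T] F] //.
rewrite pairing_node_cons -sweedler_tree1 sweedler_tree_node gamma_dual_nil mulr0 add0r.
rewrite (@eq_sweedler _ _ _ (fun a b => (b == [::])%:R * ((T == [::])%:R * pairing F a))).
  by rewrite sweedler_counitr; case: T => [|u T] /=; rewrite ?mul1r ?mul0r.
move=> a [|u b] /=; last by rewrite !mulr0 mul0r.
by rewrite pairing_nilr mul1r mulrC.
Qed.

Lemma pairing_tree1_catr T :
  (forall X Y, pairing T (X ++ Y) = sweedler T (fun a b => pairing a Y * pairing b X)) ->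
  forall X Y, pairing [:: Node T] (X ++ Y) =
              sweedler [:: Node T] (fun a b => pairing a Y * pairing b X).
Proof.
move=> IHT X Y; rewrite pairing_tree1 -sweedler_tree1 sweedler_tree_node pairing_nil.
rewrite (pairing_tree1 T Y).
rewrite (@eq_sweedler _ _ _ (fun a b => pairing a Y * gamma_dual (pairing b) X)); last first.
  by move=> a b; congr (_ * _); exact: pairing_tree1.
case: X => [|[S] X].
  rewrite cat0s eqxx mulr1 (@eq_sweedler _ _ _ (fun _ _ => 0)) ?sweedler_f0 ?addr0 //.
  by move=> a b; rewrite gamma_dual_nil mulr0.
rewrite mulr0 add0r cat_cons; case: S => [|u S] /=; first by rewrite IHT.
by rewrite (@eq_sweedler _ _ _ (fun _ _ => 0)) ?sweedler_f0 // => a b; rewrite mulr0.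
Qed.

Lemma pairing_catr Z X Y :
  pairing Z (X ++ Y) = sweedler Z (fun a b => pairing a Y * pairing b X).
Proof.
elim/forest_ind: Z X Y => [|T F IHT IHF] X Y.
  rewrite pairing_nil sweedler_nil !pairing_nil.
  by case: X => [|x X]; case: Y => [|y Y]; rewrite ?mulr1 ?mul0r ?mulr0.
rewrite pairing_cons_tree sweedler_cat sweedler_cons sweedler_tree_node cat0s.
have E1 : sweedler Y (fun a b => pairing F (X ++ a) * pairing [:: Node T] b) =
          sweedler F (fun a b => pairing (Node T :: a) Y * pairing b X).
  transitivity (sweedler Y (fun c d =>
      sweedler F (fun a b => pairing a c * pairing b X * pairing [:: Node T] d))).
    by apply: eq_sweedler => c d; rewrite IHF sweedler_fZr.
  rewrite exchange_sweedler; apply: eq_sweedler => a b.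
  by rewrite pairing_cons_tree -sweedler_fZr; apply: eq_sweedler => c d; ring.
have E2 : sweedler X (fun a b => pairing F a * pairing [:: Node T] (b ++ Y)) =
    pairing [:: Node T] Y * pairing F X +
    sweedler T (fun a b => pairing a Y * pairing ([:: Node b] ++ F) X).
  transitivity (sweedler X (fun a b => (b == [::])%:R * (pairing [:: Node T] Y * pairing F a))
    + sweedler X (fun a b => sweedler T (fun c d =>
        pairing F a * (pairing c Y * pairing [:: Node d] b)))).
    rewrite -sweedler_fD; apply: eq_sweedler => a b.
    rewrite pairing_tree1_catr // -sweedler_tree1 sweedler_tree_node pairing_nil mulrDr.
    by rewrite -sweedler_fZ; ring.
  rewrite sweedler_counitr exchange_sweedler; congr (_ + _); apply: eq_sweedler => c d.
  by rewrite cat1s pairing_cons_tree -sweedler_fZ; apply: eq_sweedler => a b; ring.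
rewrite E1 E2; ring.
Qed.

Lemma pairingC F G : pairing F G = pairing G F.
Proof.
elim/forest_ind: F G => [|T F IHT IHF] G; first by rewrite pairing_nil pairing_nilr.
rewrite pairing_node_cons -cat1s pairing_catr; apply: eq_sweedler => a b.
by rewrite IHF pairing_tree1r; congr (_ * _); apply: eq_gamma_dual => c; rewrite IHT.
Qed.

Lemma pairing_cat X Y Z :
  pairing (X ++ Y) Z = sweedler Z (fun a b => pairing Y a * pairing X b).
Proof.
by rewrite pairingC pairing_catr; apply: eq_sweedler => a b; rewrite !(pairingC _ a) (pairingC _ b).
Qed.

Lemma pairing_weight F G : fweight F <> fweight G -> pairing F G = 0.
Proof.
elim/forest_ind: F G => [|T F IHT IHF] G neFG; first by case: G neFG.
rewrite pairing_node_cons -(sweedler_f0 K G); apply: eq_sweedler_weight => a b eab.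
have [ea|nea] := eqVneq (fweight F) (fweight a); last by rewrite IHF ?mul0r //; apply/eqP.
case: b eab => [|[[|u B]] b] eab; rewrite /= ?mulr0 //.
rewrite IHT ?mulr0 //.
by move: neFG eab; rewrite !fweight_cons !tweight_node -[fweight [::]]/0%N; lia.
Qed.

End Pairing.

Section Nondegeneracy.
Variable K : fieldType.
Implicit Types (F G A B : forest) (h : forest -> forest -> K).

(* The root of the i-th tree of G is cut; its children join the trees on its left. *)
Definition root_cut_sum G h : K :=
  \sum_(i < size G) let: Node Ti := nth dot G i in h (take i G ++ Ti) (drop i.+1 G).

Lemma root_cut_sum_cons S G h :
  root_cut_sum (Node S :: G) h = h S G + root_cut_sum G (fun a b => h (Node S :: a) b).
Proof. by rewrite /root_cut_sum big_ord_recl /= drop0. Qed.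

Lemma root_cut_sum_fZ G c h :
  root_cut_sum G (fun a b => c * h a b) = c * root_cut_sum G h.
Proof. by rewrite /root_cut_sum big_distrr; apply: eq_bigr => i _; case: (nth dot G i). Qed.

Lemma root_cut_sum_sum G (I : Type) (r : seq I) (P : pred I) (f : I -> forest -> forest -> K) :
  root_cut_sum G (fun a b => \sum_(i <- r | P i) f i a b) =
  \sum_(i <- r | P i) root_cut_sum G (f i).
Proof. by rewrite /root_cut_sum exchange_big; apply: eq_bigr => i _; case: (nth dot G i). Qed.

Lemma root_cut_sum_short G h :
  (forall a b, (size b < size G)%N -> h a b = 0) -> root_cut_sum G h = 0.
Proof.
move=> e; apply: big1 => i _; case: (nth dot G i) => Ti; apply: e.
by rewrite size_drop; have := ltn_ord i; lia.
Qed.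

Lemma sweedler_gamma_dual G h :
  sweedler G (fun a b => gamma_dual (h a) b) = root_cut_sum G h.
Proof.
elim: G h => [|[S] G IH] h; first by rewrite sweedler_nil /root_cut_sum big_ord0.
rewrite sweedler_cons IH sweedler_tree_node root_cut_sum_cons cat0s.
rewrite (@eq_sweedler _ _ _ (fun a b => (b == [::])%:R * h a G)); last first.
  by move=> a [|u b] /=; rewrite ?mul1r ?mul0r.
by rewrite sweedler_counitr; ring.
Qed.

Lemma pairing_node_cons_cut T F G :
  pairing K (Node T :: F) G = root_cut_sum G (fun a b => pairing K F a * pairing K T b).
Proof.
rewrite pairing_node_cons -sweedler_gamma_dual; apply: eq_sweedler => a b.
by case: b => [|[[|u B]] b] /=; rewrite ?mulr0.
Qed.

Lemma root_cut_sum_eq0 (f : forest -> forest -> K) :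
  (forall A B, f A B + root_cut_sum B (fun a b => f (Node A :: a) b) = 0) ->
  forall A B, f A B = 0.
Proof.
move=> rel A B; move: {2}(size B) (leqnn (size B)) => n szB.
elim: n B szB A => [|n IHn] B szB A; move: (rel A B).
  by rewrite root_cut_sum_short ?addr0 // => a b; lia.
by rewrite root_cut_sum_short ?addr0 // => a b lt; apply: IHn; lia.
Qed.

(* The pairing extended to the tensor algebra, the tensor powers of H being orthogonal. *)
Fixpoint pairing_seq (L Gs : seq forest) : K :=
  match L, Gs with
  | [::], [::] => 1
  | F :: L', G :: Gs' => pairing K F G * pairing_seq L' Gs'
  | _, _ => 0
  end.

Lemma pairing_seq_cons F L' G Gs' :
  pairing_seq (F :: L') (G :: Gs') = pairing K F G * pairing_seq L' Gs'.
Proof. by []. Qed.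

Definition unroot_head (L : seq forest) : seq forest :=
  if L is (Node T :: F') :: L' then F' :: T :: L' else L.

Lemma pairing_seq_unroot T F' L' A B Gs' :
  pairing_seq ((Node T :: F') :: L') ((Node A :: B) :: Gs') =
  pairing_seq (F' :: T :: L') (A :: B :: Gs') +
  root_cut_sum B (fun a b => pairing_seq (F' :: T :: L') ((Node A :: a) :: b :: Gs')).
Proof.
rewrite !pairing_seq_cons pairing_node_cons_cut root_cut_sum_cons mulrDl mulrA.
congr (_ + _); rewrite mulrC -root_cut_sum_fZ.
by apply: eq_bigr => i _; case: (nth dot B i) => Ti; rewrite !pairing_seq_cons; ring.
Qed.

Definition null_comb (S : seq (seq forest)) (c : seq forest -> K) : Prop :=
  forall Gs, \sum_(L <- S) c L * pairing_seq L Gs = 0.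

Definition head_is_tree (L : seq forest) : bool := if L is (_ :: _) :: _ then true else false.
Definition head_is_nil (L : seq forest) : bool := if L is [::] :: _ then true else false.

Definition coef_unroot (c : seq forest -> K) (L : seq forest) : K :=
  if L is F' :: T :: L' then c ((Node T :: F') :: L') else 0.

Lemma null_comb_unroot S c : null_comb S c ->
  null_comb [seq unroot_head L | L <- S & head_is_tree L] (coef_unroot c).
Proof.
move=> nullc Gs; rewrite big_map big_filter.
case: Gs => [|A [|B Gs']].
- by rewrite big1 // => -[|[|[T] F'] L'] //= _; rewrite mulr0.
- by rewrite big1 // => -[|[|[T] F'] L'] //= _; rewrite !mulr0.
pose f A B := \sum_(L <- S | head_is_tree L) c L * pairing_seq (unroot_head L) (A :: B :: Gs').
have f0 : forall A B, f A B = 0.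
  apply: root_cut_sum_eq0 => A0 B0.
  rewrite -(nullc ((Node A0 :: B0) :: Gs')) (bigID head_is_tree) /=.
  rewrite [X in _ = _ + X]big1 ?addr0 => [|L]; last first.
    by case: L => [|[|[T] F'] L'] //= _; rewrite ?mul0r mulr0.
  rewrite /f root_cut_sum_sum -big_split; apply: eq_bigr => -[|[|[T] F'] L'] // _.
  by rewrite pairing_seq_unroot mulrDr root_cut_sum_fZ.
by rewrite -[RHS](f0 A B) /f; apply: eq_bigr => -[|[|[T] F'] L'].
Qed.

Lemma null_comb_behead S c : (forall T F' L', c ((Node T :: F') :: L') = 0) ->
  null_comb S c -> null_comb [seq behead L | L <- S & head_is_nil L] (fun L => c ([::] :: L)).
Proof.
move=> c_tree nullc Gs'; rewrite big_map big_filter -[RHS](nullc ([::] :: Gs')).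
rewrite [RHS](bigID head_is_nil) /= [X in _ = _ + X]big1 ?addr0 => [|L]; last first.
  by case: L => [|[|[T] F'] L'] //= _; rewrite ?mulr0 // c_tree mul0r.
by apply: eq_bigr => -[|[|[T] F'] L'] //= _; rewrite mul1r.
Qed.

(* Decreases under both [unroot_head] and [behead]. *)
Fixpoint seq_measure (L : seq forest) : nat :=
  if L is F :: L' then (2 * fweight F + 1 + seq_measure L')%N else 0%N.

Lemma null_comb_eq0 n S c : uniq S -> (forall L, L \in S -> (seq_measure L < n)%N) ->
  (forall L, c L != 0 -> L \in S) -> null_comb S c -> forall L, c L = 0.
Proof.
elim: n S c => [|n IH] S c uS muS suppS nullc.
  by move=> L; apply/eqP/negPn/negP => /suppS /muS.
have c_tree : forall T F' L', c ((Node T :: F') :: L') = 0.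
  move=> T F' L'; apply: (IH _ _ _ _ _ (null_comb_unroot nullc) (F' :: T :: L')).
  - rewrite map_inj_in_uniq ?filter_uniq // => x y; rewrite !mem_filter.
    case: x => [|[|[T1] F1] L1] //; case: y => [|[|[T2] F2] L2] //= _ _.
    by case=> -> -> ->.
  - move=> L /mapP [L1]; rewrite mem_filter => /andP [tree_L1 /muS mu_L1] ->.
    case: L1 tree_L1 mu_L1 => [|[|[T1] F1] L1] //= _.
    by rewrite !fweight_cons tweight_node; lia.
  - move=> -[|F1 [|T1 L1]] //=; rewrite ?eqxx // => nz.
    apply/mapP; exists ((Node T1 :: F1) :: L1) => //.
    by rewrite mem_filter; exact: suppS.
have c_nil : forall L', c ([::] :: L') = 0.
  apply: (IH _ _ _ _ _ (null_comb_behead c_tree nullc)).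
  - rewrite map_inj_in_uniq ?filter_uniq // => x y; rewrite !mem_filter.
    by case: x => [|[|? ?] L1] //; case: y => [|[|? ?] L2] //= _ _ ->.
  - move=> L /mapP [L1]; rewrite mem_filter => /andP [nil_L1 /muS mu_L1] ->.
    by case: L1 nil_L1 mu_L1 => [|[|? ?] L1] //= _; lia.
  - move=> L nz; apply/mapP; exists ([::] :: L) => //.
    by rewrite mem_filter; exact: suppS.
case=> [|[|[T] F'] L']; [|exact: c_nil|exact: c_tree].
have [inS|ninS] := boolP ([::] \in S); last first.
  by apply/eqP/negPn/negP => /suppS; rewrite (negbTE ninS).
move: (nullc [::]); rewrite (bigD1_seq [::]) //= mulr1 big1 ?addr0 // => L ne_L.
by case: L ne_L => [|[|[T] F'] L'] //= _; rewrite mulr0.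
Qed.

End Nondegeneracy.

Section PairingProperties.
Variable K : fieldType.
Implicit Types (F G : forest) (x y : H K).

Lemma mdot_gamma_basis (h : forest -> K) G : mdot h (gamma_basis K G) = gamma_dual h G.
Proof.
case: G => [|[[|u T]] G] /=; rewrite ?mdot0 ?mdotU1 //.
have -> : (Node (u :: T) == dot) = false by apply/negbTE/eqP => -[].
exact: mdot0.
Qed.

Lemma pairing_axioms_pairing : pairing_axioms (pairing K).
Proof.
split.
- by move=> x; rewrite pairHE mdot1 (eq_mdot _ (pairing_nil K)) mdot_coef.
- move=> x y z; rewrite pairHE mdotM pairH2E mdot_tens [RHS]exchange_mdot.
  apply: eq_mdot => X; apply: eq_mdot => Y; rewrite /Delta mdot_linext.
  by apply: eq_mdot => Z; rewrite pairing_cat.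
- move=> x y; rewrite !pairHE /Bp mdot_linext; apply: eq_mdot => F.
  rewrite mdotU1 /gam mdot_linext; apply: eq_mdot => G.
  by rewrite mdot_gamma_basis pairing_tree1.
Qed.

Lemma pairing_axioms_unique (q : forest -> forest -> K) :
  pairing_axioms q -> forall F G, q F G = pairing K F G.
Proof.
case=> q_unit q_mul q_Bp.
have q_nil G : q [::] G = (G == [::])%:R.
  by have := q_unit << G >>; rewrite pairHE mdot1 mdotU1 epsU.
have q_tree1 T G : q [:: Node T] G = gamma_dual (q T) G.
  have := q_Bp << T >> << G >>.
  by rewrite !pairHE /Bp linextU !mdotU1 /gam linextU mdot_gamma_basis.
have q_cat X Y Z : q (X ++ Y) Z = sweedler Z (fun a b => q Y a * q X b).
  have := q_mul << X >> << Y >> << Z >>.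
  by rewrite pairHE mdotM !mdotU1 pairH2E mdot_tens !mdotU1 DeltaU.
elim/forest_ind => [|T F IHT IHF] G; first by rewrite q_nil pairing_nil.
rewrite -cat1s q_cat cat1s pairing_node_cons; apply: eq_sweedler => a b.
by rewrite IHF q_tree1; congr (_ * _); apply: eq_gamma_dual.
Qed.

Lemma pairHC x y : pairH (pairing K) x y = pairH (pairing K) y x.
Proof.
by rewrite !pairHE exchange_mdot; apply: eq_mdot => F; apply: eq_mdot => G; apply: pairingC.
Qed.

Lemma pairH_homogeneous n m x y :
  n <> m -> homogeneous n x -> homogeneous m y -> pairH (pairing K) x y = 0.
Proof.
move=> ne_nm hx hy; rewrite /pairH big1_seq // => F /andP [_ Fx].
rewrite big1_seq // => G /andP [_ Gy].
by rewrite pairing_weight ?mulr0 // (hx F Fx) (hy G Gy).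
Qed.

Lemma pairH_nondegenerate x : (forall y, pairH (pairing K) x y = 0) -> x = 0.
Proof.
move=> x_null.
pose c L := if L is [:: F] then x@_F else 0.
have := @null_comb_eq0 K (\max_(F <- msupp x) seq_measure [:: F]).+1
  [seq [:: F] | F <- msupp x] c.
move=> c0; apply/malgP => F; rewrite mcoeff0; apply: (c0 _ _ _ _ [:: F]).
- by rewrite map_inj_uniq ?fset_uniq // => a b [].
- move=> L /mapP [G Gx ->]; rewrite ltnS.
  exact: (@leq_bigmax_seq _ _ xpredT (fun F => seq_measure [:: F])).
- case=> [|G [|? ?]] /=; rewrite ?eqxx // => nz.
  by apply/mapP; exists G => //; rewrite -mcoeff_neq0.
case=> [|G [|G' Gs]].
- by rewrite big1 // => -[|? [|? ?]]; rewrite /= ?mulr0 ?mul0r.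
- rewrite big_map -[RHS](x_null << G >>); apply: eq_bigr => F' _.
  by rewrite msuppU1 big_seq_fset1 mcoeffUU pairing_seq_cons /= !mulr1.
- by rewrite big1 // => -[|? [|? ?]]; rewrite /= ?mulr0 ?mul0r.
Qed.

End PairingProperties.

Lemma exchange_mdot_sweedler (K : fieldType) (T : choiceType) (u : {malg K[T]}) G
    (f : T -> forest -> forest -> K) :
  mdot (fun X => sweedler G (f X)) u = sweedler G (fun a b => mdot (fun X => f X a b) u).
Proof. exact: (exchange_mdot (fun X k => f X k.1 k.2)). Qed.

Section Antipode.
Variables (K : fieldType) (S : {linear H K -> H K}).
Hypothesis S_antipode : is_antipode S.
Implicit Types (F G : forest).

Definition antipode_form F G : K := mdot (pairing K ^~ G) (S << F >>).

Lemma mdot_conv (f g : H K -> H K) (h : forest -> K) G :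
  mdot h (conv f g << G >>) = sweedler G (fun A B => mdot h (f << A >> * g << B >>)).
Proof.
by rewrite /conv DeltaU mdot_sum; apply: eq_bigr => k _; rewrite mdotZ.
Qed.

Lemma antipode_form_convl F G :
  sweedler G (fun A B => sweedler F (fun a b => pairing K a B * antipode_form A b)) =
  (F == [::])%:R * (G == [::])%:R.
Proof.
have := congr1 (mdot (pairing K F)) (S_antipode.1 << G >>).
rewrite mdot_conv mdotZ mdot1 epsU pairing_nilr mulrC => <-.
apply: eq_sweedler => A B; rewrite mdotM.
transitivity (mdot (fun X => sweedler F (fun a b => pairing K a B * pairing K b X)) (S << A >>)).
  rewrite exchange_mdot_sweedler; apply: eq_sweedler => a b.
  by rewrite mdot_fZ; congr (_ * _); apply: eq_mdot => X; apply: pairingC.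
by apply: eq_mdot => X; rewrite mdotU1 pairing_catr.
Qed.

Lemma antipode_form_convr F G :
  sweedler F (fun a b => sweedler G (fun c d => antipode_form b c * pairing K a d)) =
  (F == [::])%:R * (G == [::])%:R.
Proof.
have := congr1 (mdot (pairing K ^~ G)) (S_antipode.2 << F >>).
rewrite mdot_conv mdotZ mdot1 epsU pairing_nil => <-.
apply: eq_sweedler => a b; rewrite mdotM mdotU1.
transitivity (mdot (fun Y => sweedler G (fun c d => pairing K Y c * pairing K a d)) (S << b >>)).
  rewrite exchange_mdot_sweedler; apply: eq_sweedler => c d.
  by rewrite mulrC -mdot_fZ; apply: eq_mdot => Y; rewrite mulrC.
by apply: eq_mdot => Y; rewrite pairing_cat.
Qed.

Lemma antipode_formC n F G :
  (fweight F + fweight G < n)%N -> antipode_form F G = antipode_form G F.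
Proof.
elim: n F G => // n IH F G lt_FG_n.
have null_skew : sweedler G (fun A B =>
    sweedler F (fun a b => pairing K a B * (antipode_form A b - antipode_form b A))) = 0.
  transitivity (
      sweedler G (fun A B => sweedler F (fun a b => pairing K a B * antipode_form A b)) -
      sweedler G (fun A B => sweedler F (fun a b => antipode_form b A * pairing K a B))).
    rewrite -sweedler_fB; apply: eq_sweedler => A B.
    by rewrite -sweedler_fB; apply: eq_sweedler => a b; ring.
  by rewrite antipode_form_convl [X in _ - X]exchange_sweedler antipode_form_convr subrr.
(* by the induction hypothesis, only the terms with a = 1 survive *)
have : sweedler G (fun A B => (B == [::])%:R * (antipode_form A F - antipode_form F A)) = 0.
  rewrite -null_skew; apply: eq_sweedler_weight => A B wAB.
  rewrite -(sweedler_counitl F (fun b => (B == [::])%:R * (antipode_form A b - antipode_form b A))).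
  apply: eq_sweedler_weight => -[|t a] b wab; first by rewrite eqxx mul1r pairing_nil.
  have -> : (t :: a == [::]) = false by [].
  rewrite mul0r; have [wB|/eqP wB] := eqVneq (fweight (t :: a)) (fweight B); last first.
    by rewrite pairing_weight ?mul0r.
  rewrite IH ?subrr ?mulr0 //.
  by move: lt_FG_n wab wAB wB; rewrite fweight_cons; case: t => T; rewrite tweight_node; lia.
by rewrite sweedler_counitr => /eqP; rewrite subr_eq0 => /eqP.
Qed.

Lemma pairH_antipode x y : pairH (pairing K) (S x) y = pairH (pairing K) x (S y).
Proof.
rewrite !pairHE mdot_linear; apply: eq_mdot => F.
rewrite exchange_mdot mdot_linear; apply: eq_mdot => G.
transitivity (antipode_form G F); first exact: antipode_formC (ltnSn _).
by apply: eq_mdot => X; apply: pairingC.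
Qed.

End Antipode.

Theorem theorem19 (K : fieldType) :
  exists p : forest -> forest -> K,
    (pairing_axioms p /\
     (forall q : forest -> forest -> K, pairing_axioms q ->
        forall F G : forest, q F G = p F G)) /\
    (forall x y : H K, pairH p x y = pairH p y x) /\
    (forall x : H K, (forall y : H K, pairH p x y = 0) -> x = 0) /\
    (forall y : H K, (forall x : H K, pairH p x y = 0) -> y = 0) /\
    (forall (n m : nat) (x y : H K), n <> m ->
        homogeneous n x -> homogeneous m y -> pairH p x y = 0) /\
    (forall S : {linear H K -> H K}, is_antipode S ->
        forall x y : H K, pairH p (S x) y = pairH p x (S y)).
Proof.
exists (pairing K); split.
  by split; [exact: pairing_axioms_pairing | exact: pairing_axioms_unique].
split; first exact: pairHC.
split; first exact: pairH_nondegenerate.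
split; first by move=> y y_null; apply: pairH_nondegenerate => x; rewrite pairHC.
split; first exact: pairH_homogeneous.
by move=> S S_antipode; exact: pairH_antipode.
Qed.
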